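(* The formal system CC (Constructive Concepts) is consistent; that is, $\bot$ is not a theorem of CC.
   Context: The language of CC is the first-order language of set theory (binary relation symbols $\in$ and $=$), augmented by a unary logical operator $\Box$ (read ''is provable''). Formulas are built up in the usual way from atomic formulas using $\wedge,\vee,\to,\forall,\exists$, with the additional clause that if $A$ is a formula then so is $\Box A$. The symbol $\bot$ abbreviates the sentence $(\forall x)(\forall y)(x\in y)$, and $\neg A$ abbreviates $A\to\bot$. CC consists of the axioms and deduction rules of intuitionistic predicate calculus with equality, together with: (1) $A\to\Box A$; (2) $\Box(A\wedge B)\leftrightarrow(\Box A\wedge\Box B)$; (3) $\Box(A\vee B)\leftrightarrow(\Box A\vee\Box B)$; (4) $\Box((\exists x)A)\leftrightarrow(\exists x)\Box A$; (5) $\Box((\forall x)A)\leftrightarrow(\forall x)\Box A$; (6) $\Box(A\to B)\to(\Box A\to\Box B)$; the deduction rule: from $\Box A$ infer $A$; (7) extensionality: $x=y\leftrightarrow(\forall u)(u\in x\leftrightarrow u\in y)$; (8) comprehension scheme: $(\exists x)(\forall r)(r\in x\leftrightarrow\Box A)$, where $r$ is a fixed variable, $x$ is any variable, and $A$ is any formula (of the language with $\Box$) in which $x$ does not occur free. Here $A,B$ range over all formulas of the language. *)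

(* Deep embedding of the formal system CC (Constructive Concepts).
   Variables are de Bruijn indices (nat); the only terms are variables. *)

Inductive form : Type :=
| Mem : nat -> nat -> form          (* x ∈ y *)
| Eq  : nat -> nat -> form
| And : form -> form -> form
| Or  : form -> form -> form
| Imp : form -> form -> form
| All : form -> form
| Ex  : form -> form
| Box : form -> form.               (* "is provable" *)

Definition up (s : nat -> nat) (n : nat) : nat :=
  match n with 0 => 0 | S m => S (s m) end.

(* Renaming = substitution, since all terms are variables. *)
Fixpoint rename (s : nat -> nat) (A : form) : form :=
  match A with
  | Mem i j => Mem (s i) (s j)
  | Eq i j => Eq (s i) (s j)
  | And A B => And (rename s A) (rename s B)
  | Or A B => Or (rename s A) (rename s B)
  | Imp A B => Imp (rename s A) (rename s B)
  | All A => All (rename (up s) A)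
  | Ex A => Ex (rename (up s) A)
  | Box A => Box (rename s A)
  end.

Definition lift (A : form) : form := rename S A.

(* A[t/0]: substitute variable t for index 0 and lower the other free indices *)
Definition inst (t : nat) (A : form) : form :=
  rename (fun n => match n with 0 => t | S m => m end) A.

Definition Iff (A B : form) : form := And (Imp A B) (Imp B A).

Definition Bot : form := All (All (Mem 1 0)).

Definition Neg (A : form) : form := Imp A Bot.

(* Theorems of CC: Hilbert-style intuitionistic predicate calculus with
   equality (over the language with Box), plus the CC axioms and rule. *)
Inductive Provable : form -> Prop :=
| ax_K  : forall A B, Provable (Imp A (Imp B A))
| ax_S  : forall A B C,
    Provable (Imp (Imp A (Imp B C)) (Imp (Imp A B) (Imp A C)))
| ax_andI : forall A B, Provable (Imp A (Imp B (And A B)))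
| ax_andE1 : forall A B, Provable (Imp (And A B) A)
| ax_andE2 : forall A B, Provable (Imp (And A B) B)
| ax_orI1 : forall A B, Provable (Imp A (Or A B))
| ax_orI2 : forall A B, Provable (Imp B (Or A B))
| ax_orE : forall A B C,
    Provable (Imp (Imp A C) (Imp (Imp B C) (Imp (Or A B) C)))
| ax_efq : forall A, Provable (Imp Bot A)
| ax_allE : forall A t, Provable (Imp (All A) (inst t A))
| ax_exI  : forall A t, Provable (Imp (inst t A) (Ex A))
| ax_refl : forall t, Provable (Eq t t)
| ax_leib : forall A s t, Provable (Imp (Eq s t) (Imp (inst s A) (inst t A)))
| r_mp : forall A B, Provable (Imp A B) -> Provable A -> Provable B
| r_gen : forall A, Provable A -> Provable (All A)
| r_allI : forall A B, Provable (Imp (lift B) A) -> Provable (Imp B (All A))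
| r_exE : forall A B, Provable (Imp A (lift B)) -> Provable (Imp (Ex A) B)
| cc1 : forall A, Provable (Imp A (Box A))
| cc2 : forall A B, Provable (Iff (Box (And A B)) (And (Box A) (Box B)))
| cc3 : forall A B, Provable (Iff (Box (Or A B)) (Or (Box A) (Box B)))
| cc4 : forall A, Provable (Iff (Box (Ex A)) (Ex (Box A)))
| cc5 : forall A, Provable (Iff (Box (All A)) (All (Box A)))
| cc6 : forall A B, Provable (Imp (Box (Imp A B)) (Imp (Box A) (Box B)))
| cc_rule : forall A, Provable (Box A) -> Provable A
| cc7 : forall x y,
    Provable (Iff (Eq x y) (All (Iff (Mem 0 (S x)) (Mem 0 (S y)))))
(* (8) comprehension: (exists x)(forall r)(r ∈ x <-> Box A), where in A the
   index 0 is the variable r and x does not occur free in A *)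
| cc8 : forall A,
    Provable (Ex (All (Iff (Mem 0 1) (Box (rename (up S) A))))).

From Stdlib Require Import Lia FunctionalExtensionality PropExtensionality.

(* We build a Kripke model in which ⊥ fails.  The worlds are the natural numbers, and
   world m sees every k <= m.  World 0 validates everything, and □A holds at S k exactly
   when A holds at k.  Under this reading, A → □A is persistence, and the rule "from □A
   infer A" is sound because validity quantifies over every world.  A concept carries,
   at each level n, a membership predicate on level-n truncations of concepts.  The truncation
   at level S n determines membership at level n, and equality at world m is equality of
   level-m truncations.  Comprehension {r | □A} is then well founded, since membership
   at level k only refers to the truth of A at the earlier world k.  ⊥ fails at world 1
   because the empty concept has no members. *)

Fixpoint approx (n : nat) : Type :=
  match n with 0 => unit | S n => (approx n * (approx n -> Prop))%type end.

Definition concept := forall n, approx n -> Prop.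

(* Membership at level n demands membership at every lower level, which keeps it
   persistent. *)
Fixpoint mem_at (x : concept) (n : nat) : approx n -> Prop :=
  match n return approx n -> Prop with
  | 0 => fun s => x 0 s
  | S n => fun s => x (S n) s /\ mem_at x n (fst s)
  end.

(* The predicate component is restricted to truncations of concepts, so that
   extensionally equal concepts have equal truncations. *)
Fixpoint trunc (n : nat) (x : concept) : approx n :=
  match n return approx n with
  | 0 => tt
  | S n => (trunc n x, fun s => (exists d, trunc n d = s) /\ mem_at x n s)
  end.

Definition scons (d : concept) (r : nat -> concept) (n : nat) : concept :=
  match n with 0 => d | S n => r n end.

Definition empty_concept : concept := fun _ _ => False.

Fixpoint holds (A : form) (m : nat) (r : nat -> concept) : Prop :=
  match A with
  | Mem i j => match m with 0 => True | S k => mem_at (r j) k (trunc k (r i)) end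
  | Eq i j => trunc m (r i) = trunc m (r j)
  | And A B => holds A m r /\ holds B m r
  | Or A B => holds A m r \/ holds B m r
  | Imp A B => forall k, k <= m -> holds A k r -> holds B k r
  | All A => forall d, holds A m (scons d r)
  | Ex A => exists d, holds A m (scons d r)
  | Box A => match m with 0 => True | S k => holds A k r end
  end.

Definition valid (A : form) : Prop := forall m r, holds A m r.

Lemma holds_S A m r : holds A (S m) r -> holds A m r.
Proof.
  revert m r. induction A; intros m r H; simpl in *.
  - destruct m; [exact I | exact (proj2 H)].
  - exact (f_equal fst H).
  - destruct H; split; auto.
  - destruct H; auto.
  - intros k Hk. apply H. lia.
  - intros d. apply IHA, H.
  - destruct H as [d Hd]. exists d. auto.
  - destruct m; [exact I | auto].
Qed.

Lemma holds_le A k m r : k <= m -> holds A m r -> holds A k r.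
Proof. induction 1; auto using holds_S. Qed.

Lemma holds_0 A r : holds A 0 r.
Proof.
  revert r. induction A; intros r; simpl; auto.
  - intros k Hk _. replace k with 0 by lia. auto.
  - exists empty_concept. auto.
Qed.

Lemma not_holds_Bot m r : ~ holds Bot (S m) r.
Proof.
  intros H. specialize (H empty_concept empty_concept).
  destruct m; [exact H | exact (proj1 H)].
Qed.

Lemma trunc_eq_le k m x y : k <= m -> trunc m x = trunc m y -> trunc k x = trunc k y.
Proof. induction 1; auto. intros Heq. apply IHle, (f_equal fst Heq). Qed.

Lemma mem_at_trunc_eq k x y d : trunc (S k) x = trunc (S k) y ->
  mem_at x k (trunc k d) <-> mem_at y k (trunc k d).
Proof.
  intros H.
  assert (E := f_equal (fun p => snd p (trunc k d)) H). simpl in E.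
  split; intros Hd.
  - assert (Hx : (exists d', trunc k d' = trunc k d) /\ mem_at x k (trunc k d))
      by eauto.
    rewrite E in Hx. apply Hx.
  - assert (Hy : (exists d', trunc k d' = trunc k d) /\ mem_at y k (trunc k d))
      by eauto.
    rewrite <- E in Hy. apply Hy.
Qed.

Lemma trunc_eq_ext k x y :
  (forall j d, j < k -> mem_at x j (trunc j d) <-> mem_at y j (trunc j d)) ->
  trunc k x = trunc k y.
Proof.
  revert x y. induction k; intros x y H; simpl; [reflexivity |]. f_equal.
  - apply IHk. intros j d Hj. apply H. lia.
  - apply functional_extensionality. intros s. apply propositional_extensionality.
    split; intros [[d <-] Hd]; split; eauto; apply (H k d); auto.
Qed.

Lemma holds_trunc_eq A m r r' : (forall i, trunc m (r i) = trunc m (r' i)) ->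
  holds A m r <-> holds A m r'.
Proof.
  revert m r r'.
  induction A; intros m r r' H; simpl.
  - destruct m; [tauto |].
    assert (Hn := f_equal fst (H n)). simpl in Hn. rewrite Hn.
    apply mem_at_trunc_eq, H.
  - rewrite (H n), (H n0). tauto.
  - rewrite (IHA1 m r r' H), (IHA2 m r r' H). tauto.
  - rewrite (IHA1 m r r' H), (IHA2 m r r' H). tauto.
  - assert (Hk : forall k, k <= m -> forall i, trunc k (r i) = trunc k (r' i))
      by eauto using trunc_eq_le.
    split; intros Himp k Hle;
      rewrite <- ?(IHA1 k r r' (Hk k Hle)), <- ?(IHA2 k r r' (Hk k Hle)); auto;
      rewrite ?(IHA1 k r r' (Hk k Hle)), ?(IHA2 k r r' (Hk k Hle)); auto.
  - assert (Hd : forall d, holds A m (scons d r) <-> holds A m (scons d r'))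
      by (intros d; apply IHA; intros [|i]; simpl; auto).
    split; intros Hall d; apply Hd; auto; apply Hall.
  - assert (Hd : forall d, holds A m (scons d r) <-> holds A m (scons d r'))
      by (intros d; apply IHA; intros [|i]; simpl; auto).
    split; intros [d Hx]; exists d; apply Hd; auto.
  - destruct m; [tauto |]. apply IHA. intros i. apply (trunc_eq_le m (S m)); auto.
Qed.

Lemma holds_rename A s m r r' : (forall n, r' n = r (s n)) ->
  holds (rename s A) m r <-> holds A m r'.
Proof.
  revert s m r r'.
  induction A; intros s m r r' H; simpl; rewrite ?H; try tauto.
  - rewrite (IHA1 s m r r' H), (IHA2 s m r r' H). tauto.
  - rewrite (IHA1 s m r r' H), (IHA2 s m r r' H). tauto.
  - split; intros Himp k Hk.
    + rewrite <- (IHA1 s k r r' H), <- (IHA2 s k r r' H); auto.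
    + rewrite (IHA1 s k r r' H), (IHA2 s k r r' H); auto.
  - assert (Hd : forall d, holds (rename (up s) A) m (scons d r) <-> holds A m (scons d r'))
      by (intros d; apply IHA; intros [|i]; simpl; auto).
    split; intros Hall d; apply Hd; auto; apply Hall.
  - assert (Hd : forall d, holds (rename (up s) A) m (scons d r) <-> holds A m (scons d r'))
      by (intros d; apply IHA; intros [|i]; simpl; auto).
    split; intros [d Hx]; exists d; apply Hd; auto.
  - destruct m; [tauto |]. auto.
Qed.

Lemma holds_inst A t m r : holds (inst t A) m r <-> holds A m (scons (r t) r).
Proof. apply holds_rename. intros [|n]; reflexivity. Qed.

Lemma holds_lift B d m r : holds (lift B) m (scons d r) <-> holds B m r.
Proof. apply holds_rename. reflexivity. Qed.

Lemma valid_leibniz A s t : valid (Imp (Eq s t) (Imp (inst s A) (inst t A))).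
Proof.
  intros m r k Hk Hst k' Hk' H. apply holds_inst. apply holds_inst in H.
  revert H. apply holds_trunc_eq. intros [|i]; simpl; auto.
  apply (trunc_eq_le k' k); auto.
Qed.

Lemma valid_extensionality x y :
  valid (Iff (Eq x y) (All (Iff (Mem 0 (S x)) (Mem 0 (S y))))).
Proof.
  intros m r. split.
  - intros k Hk Hxy d.
    assert (Hmem : forall k', k' < k ->
        mem_at (r x) k' (trunc k' d) <-> mem_at (r y) k' (trunc k' d))
      by (intros k' Hk'; apply mem_at_trunc_eq, (trunc_eq_le _ k); auto).
    split; intros [|k'] Hk' Hd; simpl in *; auto; apply Hmem; auto.
  - intros k Hk H. apply trunc_eq_ext. intros j d Hj.
    destruct (H d) as [Hxy Hyx]. split; intros Hd.
    + exact (Hxy (S j) Hj Hd).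
    + exact (Hyx (S j) Hj Hd).
Qed.

(* The concept {r | □A} in environment r, read at each level j as "A holds at j". *)
Definition comprehension (A : form) (r : nat -> concept) : concept :=
  fun j s => exists d, trunc j d = s /\ holds A j (scons d r).

Lemma mem_at_comprehension A r j d :
  mem_at (comprehension A r) j (trunc j d) <-> holds A j (scons d r).
Proof.
  assert (Hlevel : forall j, comprehension A r j (trunc j d) <-> holds A j (scons d r)).
  { intros i. split.
    - intros [d' [E Hd']]. revert Hd'. apply holds_trunc_eq.
      intros [|n]; simpl; auto.
    - intros Hd. exists d. auto. }
  induction j; simpl.
  - apply Hlevel.
  - rewrite IHj, Hlevel. split; [tauto |]. intros Hd. split; auto using holds_S.
Qed.

Lemma valid_comprehension A :
  valid (Ex (All (Iff (Mem 0 1) (Box (rename (up S) A))))).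
Proof.
  intros m r. exists (comprehension A r). intros d.
  assert (HA : forall k, holds (rename (up S) A) k (scons d (scons (comprehension A r) r))
                         <-> holds A k (scons d r))
    by (intros k; apply holds_rename; intros [|n]; reflexivity).
  split; intros [|k] Hk; simpl; auto; intros Hd.
  - apply HA, mem_at_comprehension, Hd.
  - apply mem_at_comprehension, HA, Hd.
Qed.

Theorem provable_valid A : Provable A -> valid A.
Proof.
  induction 1; intros m r; simpl.
  - intros k Hk HA k' Hk' _. eauto using holds_le.
  - intros k Hk HABC k' Hk' HAB k'' Hk'' HA.
    apply (HABC k'' ltac:(lia) HA k'' (le_n _)). auto.
  - intros k Hk HA k' Hk' HB. eauto using holds_le.
  - intros k Hk [HA HB]; auto.
  - intros k Hk [HA HB]; auto.
  - intros k Hk HA; auto.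
  - intros k Hk HB; auto.
  - intros k Hk HAC k' Hk' HBC k'' Hk'' [HA | HB].
    + apply HAC; auto. lia.
    + apply HBC; auto.
  - intros [|k] Hk H; [apply holds_0 | contradiction (not_holds_Bot k r H)].
  - intros k Hk H. apply holds_inst, H.
  - intros k Hk H. exists (r t). apply holds_inst, H.
  - reflexivity.
  - apply valid_leibniz.
  - apply (IHProvable1 m r m (le_n _)), IHProvable2.
  - intros d. apply IHProvable.
  - intros k Hk HB d. apply (IHProvable m (scons d r) k Hk), holds_lift, HB.
  - intros k Hk [d Hd]. apply (holds_lift B d), (IHProvable m (scons d r) k Hk), Hd.
  - intros [|k] Hk HA; auto using holds_S.
  - split; intros [|k] Hk; simpl; tauto.
  - split; intros [|k] Hk; simpl; tauto.
  - split; intros [|k] Hk; simpl; auto. exists empty_concept. auto.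
  - split; intros [|k] Hk; simpl; auto.
  - intros k Hk HAB [|k'] Hk' HA; auto. destruct k; [lia |].
    apply HAB; auto. lia.
  - exact (IHProvable (S m) r).
  - apply valid_extensionality.
  - apply valid_comprehension.
Qed.

Theorem theorem5p1 : ~ Provable Bot.
Proof.
  intros H.
  exact (not_holds_Bot 0 (fun _ => empty_concept) (provable_valid Bot H 1 _)).
Qed.
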